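(* Let $n\ge 2$ be an integer and $k$ an integer with $1\le k\le 2^n$. Then $$v_2\big(s(2^n,k+1)\big)>v_2\big(s(2^n,k)\big)-n.$$
   Context: The (unsigned) Stirling numbers of the first kind $s(n,k)$ are defined by $x(x+1)\cdots(x+n-1)=\sum_{k=0}^n s(n,k)x^k$, with $s(n,k)=0$ for $k>n$. $v_2$ denotes the $2$-adic valuation, with the convention $v_2(0)=+\infty$. *)

From mathcomp Require Import all_boot all_order all_algebra.
Set Implicit Arguments. Unset Strict Implicit. Unset Printing Implicit Defensive.
Import GRing.Theory.
Local Open Scope ring_scope.

Definition rising_poly (n : nat) : {poly int} :=
  \prod_(i < n) ('X + (i%:R)%:P).

(* unsigned Stirling numbers of the first kind: coefficient of x^k
   (automatically 0 for k > n since the polynomial has degree n) *)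
Definition stirling1 (n k : nat) : int := (rising_poly n)`_k.

(* 2-adic valuation with v2(0) = +oo, encoded as None *)
Definition v2 (z : int) : option nat :=
  if z == 0 then None else Some (logn 2 `|z|%N).

(* the strict inequality  a > b - n  in N ∪ {+oo}  (with +oo - n = +oo) *)
Definition v_gt_minus (a b : option nat) (n : nat) : Prop :=
  match a, b with
  | None, _ => True
  | Some _, None => False
  | Some x, Some y => (Posz y - Posz n < Posz x)%R
  end.

From Pilot Require Import Defs.
From mathcomp Require Import all_boot all_order all_algebra.
From mathcomp Require Import zify ring.

(* Let [N = 2^(c+1)] with [c >= 1].  Both [v2 (s(N, k))] and [v2 (s(N, k+1))]
   are computed exactly from one auxiliary polynomial, and the theorem is a
   comparison of the two formulas.

   Pairing [x + 2^c - (d+1)] with [x + 2^c + (d+1)] factors the rising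
   factorial as [x (x + 2^c) W_c(x (x + 2^(c+1)))] with
   [W_c(y) = \prod_(i < 2^c - 1) (y + 2^(2c) - (i+1)^2)].  In the resulting
   expansion of [s(N, 2s+b+1)] ([b] a bit) the summand of index [s] dominates,
   so [v(s(N, 2s+b+1)) = v((W_c)_s) + (c if b = 0)], provided the valuations
   of the coefficients of [W_c] drop by at most [2c] per step.

   That slope bound follows from the exact formula [v((G_c)_t) = v((G_c)_0) +
   phi c t] for [G_c(y) = W_c(2^(2c) y)], where [phi] is a min-plus recursion.
   Splitting the factors of [G_(c+1)] by parity gives [G_(c+1) = 4^(2^c-1) K_c
   G_c]; comparing [K_c] with [(X - 1)^(2^c)] through Newton's identities gives
   [v((K_c)_j) = (2c+2) j + v(C(2^c, j))], and the product formula then has a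
   unique dominant term. *)

Set Implicit Arguments. Unset Strict Implicit. Unset Printing Implicit Defensive.
Import GRing.Theory.

(* The 2-adic valuation of an integer, [val2 0 = 0]; [v2] of Defs is its
   partial version with [v2 0 = +oo]. *)
Definition val2 (z : int) : nat := logn 2 `|z|.

Lemma v2E (z : int) : z != 0%R -> v2 z = Some (val2 z).
Proof. by move=> nz; rewrite /v2 (negbTE nz). Qed.

Section Valuation.
Local Open Scope ring_scope.

Lemma natz_pow2 e : (2 ^ e)%N%:Z = 2 ^+ e :> int.
Proof. by rewrite -natz natrX. Qed.

Lemma pow2_neq0 e : (2 : int) ^+ e != 0.
Proof. by rewrite expf_neq0. Qed.

Lemma dvdz_pow2E (z : int) e : z != 0 -> (2 ^+ e %| z)%Z = (e <= val2 z)%N.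
Proof.
by move=> nz; rewrite -natz_pow2 dvdzE absz_nat /val2 pfactor_dvdn // absz_gt0.
Qed.

Lemma dvdz_pow2_val (z : int) : (2 ^+ val2 z %| z)%Z.
Proof.
have [->|nz] := eqVneq z 0; first exact: dvdz0.
by rewrite dvdz_pow2E.
Qed.

Lemma dvdz_pow2_le e e' (z : int) : (e <= e')%N -> (2 ^+ e' %| z)%Z -> (2 ^+ e %| z)%Z.
Proof. by move=> le; apply: dvdz_trans; apply: dvdz_exp2l. Qed.

Lemma val2M (x y : int) : x != 0 -> y != 0 -> val2 (x * y) = (val2 x + val2 y)%N.
Proof. by move=> nx ny; rewrite /val2 abszM lognM // absz_gt0. Qed.

Lemma val2_nat n : val2 n%:Z = logn 2 n.
Proof. by rewrite /val2 absz_nat. Qed.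

Lemma val2_pow2 e : val2 (2 ^+ e) = e.
Proof. by rewrite -natz_pow2 val2_nat pfactorK. Qed.

Lemma odd_intE s : 2 * s%:Z + 1 = (2 * s + 1)%N%:Z.
Proof. by rewrite PoszD PoszM. Qed.

Lemma val2_odd s : val2 (2 * s%:Z + 1) = 0%N.
Proof. by rewrite odd_intE val2_nat logn_coprime // coprime2n oddD oddM. Qed.

Lemma odd_int_neq0 s : 2 * s%:Z + 1 != 0.
Proof. by rewrite odd_intE; apply/eqP; lia. Qed.

Lemma val2_dominant (x y : int) : x != 0 -> (2 ^+ (val2 x).+1 %| y)%Z ->
  x + y != 0 /\ val2 (x + y) = val2 x.
Proof.
move=> nx hy.
have nd : ~~ (2 ^+ (val2 x).+1 %| x)%Z by rewrite dvdz_pow2E // ltnn.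
have xy_nd : ~~ (2 ^+ (val2 x).+1 %| x + y)%Z.
  by apply: contra nd => h; have := rpredB h hy; rewrite addrK.
have nz : x + y != 0 by apply: contraNneq xy_nd => ->; rewrite dvdz0.
split => //; apply/eqP; rewrite eqn_leq leqNgt -dvdz_pow2E // xy_nd.
rewrite -dvdz_pow2E // rpredD ?dvdz_pow2_val //.
by apply: dvdz_pow2_le hy; apply: leqnSn.
Qed.

Lemma val2_sum_dominant (I : finType) (F : I -> int) i0 : F i0 != 0 ->
  (forall i, i != i0 -> (2 ^+ (val2 (F i0)).+1 %| F i)%Z) ->
  \sum_i F i != 0 /\ val2 (\sum_i F i) = val2 (F i0).
Proof.
move=> nz hF; rewrite (bigD1 i0) //=; apply: val2_dominant => //.
by apply: rpred_sum => i; apply: hF.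
Qed.

End Valuation.

Lemma logn2_lt k a : 0 < k -> k < 2 ^ a -> logn 2 k < a.
Proof.
move=> k0 ka; rewrite -(@ltn_exp2l 2) //.
by apply: leq_ltn_trans ka; apply: dvdn_leq => //; apply: pfactor_dvdnn.
Qed.

Lemma logn2_le_self k : logn 2 k <= k.
Proof. by case: k => // k; apply/ltnW/logn2_lt/ltn_expl. Qed.

Lemma logn2_addn x y : 0 < x -> 0 < y ->
  logn 2 (x + y) <= logn 2 x \/ logn 2 y <= logn 2 x.
Proof.
move=> x0 y0; case: (leqP (logn 2 (x + y)) (logn 2 y)) => h.
- left; rewrite -pfactor_dvdn // -(@dvdn_addl y) ?pfactor_dvdnn //.
  by apply: dvdn_trans (pfactor_dvdnn 2 y); apply: dvdn_exp2l.
- right; rewrite -pfactor_dvdn // -(@dvdn_addl y) ?pfactor_dvdnn //.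
  by apply: dvdn_trans (pfactor_dvdnn 2 (x + y)); apply/dvdn_exp2l/ltnW.
Qed.

Lemma bin_pow2_even a k : 0 < k -> k < 2 ^ a -> ~~ odd 'C(2 ^ a, k).
Proof.
case: k => // k _ ka; apply/negP => hodd.
have e := mul_bin_diag (2 ^ a) k.
have h1 : logn 2 (k.+1 * 'C(2 ^ a, k.+1)) = logn 2 k.+1.
  by rewrite mulnC logn_Gauss // coprime2n.
have h2 : a <= logn 2 (2 ^ a * 'C((2 ^ a).-1, k)).
  rewrite -pfactor_dvdn ?dvdn_mulr // muln_gt0 expn_gt0 bin_gt0 /=.
  by rewrite -ltnS prednK ?expn_gt0 // ltnW.
by move: h2; rewrite e h1 leqNgt logn2_lt.
Qed.

Lemma bin_pow2_pred_odd a k : k < 2 ^ a -> odd 'C((2 ^ a).-1, k).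
Proof.
elim: k => [|k IH] ka; first by rewrite bin0.
have := bin_pow2_even (isT : 0 < k.+1) ka.
rewrite -{1}(prednK (expn_gt0 2 a)) binS oddD IH ?(ltnW ka) //.
by case: (odd _).
Qed.

Lemma logn_bin_pow2 a j : 0 < j -> j <= 2 ^ a -> logn 2 'C(2 ^ a, j) + logn 2 j = a.
Proof.
case: j => // k _ ka.
have hC : 0 < 'C(2 ^ a, k.+1) by rewrite bin_gt0.
have : logn 2 (k.+1 * 'C(2 ^ a, k.+1)) = a.
  rewrite -mul_bin_diag mulnC logn_Gauss ?pfactorK //.
  by rewrite coprime2n bin_pow2_pred_odd.
by rewrite lognM // addnC.
Qed.

Definition binval c j := logn 2 'C(2 ^ c, j).
Definition wdeg c := (2 ^ c).-1.

Lemma binval0 c : binval c 0 = 0.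
Proof. by rewrite /binval bin0 logn1. Qed.

Lemma binval_top c : binval c (2 ^ c) = 0.
Proof. by rewrite /binval binn logn1. Qed.

Lemma binval_le c j : binval c j <= c.
Proof.
case: j => [|j]; first by rewrite binval0.
case: (leqP j.+1 (2 ^ c)) => h; last by rewrite /binval bin_small.
by have := logn_bin_pow2 (isT : 0 < j.+1) h; rewrite /binval; lia.
Qed.

Lemma binval_sym c i : i <= 2 ^ c -> binval c (2 ^ c - i) = binval c i.
Proof. by move=> h; rewrite /binval bin_sub. Qed.

Lemma wdegS c : wdeg c.+1 = wdeg c + 2 ^ c.
Proof. by rewrite /wdeg expnS; have := expn_gt0 2 c; lia. Qed.

Lemma wdeg_lt c : wdeg c < 2 ^ c.
Proof. by rewrite /wdeg; have := expn_gt0 2 c; lia. Qed.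

(* [phi c t] is the predicted excess valuation of the [t]-th coefficient of
   the polynomial [G_c] below; it satisfies a min-plus recursion in which
   [phi c.+1 t] picks up the factor [K_c] at the index [t - wdeg c]. *)
Fixpoint phi c t : nat :=
  match c with
  | 0 => 0
  | c'.+1 => if t <= wdeg c' then phi c' t
             else phi c' (wdeg c') + 2 * c'.+1 * (t - wdeg c') + binval c' (t - wdeg c')
  end.

(* Unfolding equations for [phi c.+1] below, above, and uniformly across the
   threshold [wdeg c]; the last form is the one matching the product formula. *)
Lemma phiS_le c t : t <= wdeg c -> phi c.+1 t = phi c t.
Proof. by move=> h /=; rewrite h. Qed.

Lemma phiS_ge c t : wdeg c <= t ->
  phi c.+1 t = phi c (wdeg c) + 2 * c.+1 * (t - wdeg c) + binval c (t - wdeg c).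
Proof.
rewrite leq_eqVlt => /orP[/eqP <-|h] /=; last by rewrite leqNgt h.
by rewrite leqnn subnn binval0 !muln0 !addn0.
Qed.

Lemma phi_rec c t :
  phi c.+1 t = 2 * c.+1 * (t - wdeg c) + binval c (t - wdeg c) + phi c (t - (t - wdeg c)).
Proof.
case: (leqP t (wdeg c)) => h.
  by rewrite phiS_le // (_ : t - wdeg c = 0) ?binval0 ?muln0 ?subn0 //; lia.
by rewrite phiS_ge ?(ltnW h) // (_ : t - (t - wdeg c) = wdeg c); lia.
Qed.

Lemma phi0 c : phi c 0 = 0.
Proof. by elim: c => //= c ->. Qed.

Lemma phi_top c : phi c.+1 (wdeg c.+1) = phi c (wdeg c) + 2 * c.+1 * 2 ^ c.
Proof. by rewrite phiS_ge wdegS ?leq_addr // addKn binval_top addn0. Qed.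

Lemma phi_top_bound c s : s <= wdeg c -> phi c (wdeg c) <= phi c s + 2 * c * (wdeg c - s).
Proof.
elim: c s => [|c IH] s hs //.
have := binval_le c (s - wdeg c); rewrite phi_top.
case: (leqP s (wdeg c)) => h.
  rewrite phiS_le // wdegS (_ : wdeg c + 2 ^ c - s = wdeg c - s + 2 ^ c); last by lia.
  by have := IH s h; nia.
by rewrite (phiS_ge (ltnW h)) wdegS; nia.
Qed.

Lemma phi_slope c s t : s < t -> t <= wdeg c -> phi c t + 1 <= phi c s + 2 * c * (t - s) + c.
Proof.
elim: c s t => [|c IH] s t hst ht; first by rewrite /wdeg expn0 in ht; lia.
have := wdegS c; have := binval_le c (t - wdeg c); have := binval_le c (s - wdeg c).
case: (leqP t (wdeg c)) => h.
  by rewrite !phiS_le //; [have := IH s t hst h; nia | lia].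
rewrite (@phiS_ge c t); last by lia.
case: (leqP s (wdeg c)) => h2.
  by rewrite phiS_le //; have := phi_top_bound h2; nia.
by rewrite phiS_ge; [nia | lia].
Qed.

Lemma phi_gap c i : 0 < i -> i <= wdeg c ->
  phi c (wdeg c) + c + 1 <= phi c (wdeg c - i) + 2 * c.+1 * i + logn 2 i.
Proof.
case: c => [|c] i0 hi; first by rewrite /wdeg expn0 in hi; lia.
rewrite phi_top; have hS := wdegS c; have hlt := wdeg_lt c.
case: (leqP i (2 ^ c)) => h.
  rewrite phiS_ge; last by lia.
  rewrite (_ : wdeg c.+1 - i - wdeg c = 2 ^ c - i); last by lia.
  by rewrite binval_sym //; have := logn_bin_pow2 i0 h; rewrite /binval; nia.
rewrite phiS_le; last by lia.
rewrite (_ : wdeg c.+1 - i = wdeg c - (i - 2 ^ c)); last by lia.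
have := ltn_expl c (isT : 1 < 2); have := phi_top_bound (leq_subr (i - 2 ^ c) (wdeg c)).
by rewrite (_ : wdeg c - (wdeg c - (i - 2 ^ c)) = i - 2 ^ c); nia.
Qed.

Lemma phi_mono c s t : s <= t -> t <= wdeg c -> phi c s <= phi c t.
Proof.
elim: c s t => [|c IH] s t hst ht //.
case: (leqP t (wdeg c)) => h; first by rewrite !phiS_le //; [exact: IH | lia].
rewrite (@phiS_ge c t); last by lia.
case: (leqP s (wdeg c)) => h2.
  rewrite phiS_le // -addnA.
  exact: leq_trans (IH s (wdeg c) h2 (leqnn _)) (leq_addr _ _).
have hS := wdegS c; rewrite phiS_ge; last by lia.
have := binval_le c (s - wdeg c).
have := @logn_bin_pow2 c (t - wdeg c) ltac:(lia) ltac:(lia).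
have := logn2_le_self (t - wdeg c); rewrite /binval.
case: (ltnP (s - wdeg c) (t - wdeg c)) => h3; last by have -> : s = t by lia.
nia.
Qed.

Lemma phi_strict_min c t j : t <= wdeg c.+1 -> j <= t -> j <= 2 ^ c -> t - j <= wdeg c ->
  j != t - wdeg c -> phi c.+1 t < 2 * c.+1 * j + binval c j + phi c (t - j).
Proof.
move=> ht hjt hj2 htj hne; have hS := wdegS c.
case: (leqP t (wdeg c)) => hD.
  have j0 : 0 < j by move: hne; rewrite (_ : t - wdeg c = 0); lia.
  have hlt : t - j < t by lia.
  rewrite phiS_le //; have := phi_slope hlt hD; have := logn_bin_pow2 j0 hj2.
  by have := logn2_le_self j; rewrite /binval (_ : t - (t - j) = j); lia.
rewrite phiS_ge ?(ltnW hD) //.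
have hlow : t - wdeg c < j by move: hne; lia.
set a := t - wdeg c; set i := j - a.
have a0 : 0 < a by lia.
have i0 : 0 < i by lia.
have hiD : i <= wdeg c by lia.
have := logn2_lt i0 (leq_ltn_trans hiD (wdeg_lt c)).
have := phi_gap i0 hiD; have := @logn_bin_pow2 c a a0 ltac:(lia).
have := @logn_bin_pow2 c j ltac:(lia) hj2.
rewrite /binval (_ : t - j = wdeg c - i); last by lia.
have e : j = a + i by lia.
by case: (logn2_addn a0 i0); rewrite -?e; nia.
Qed.

Section LinearProducts.
Local Open Scope ring_scope.
Variable R : comRingType.

Definition linf (a b : R) : {poly R} := a%:P * 'X + b%:P.
Definition linprod (a : R) (b : nat -> R) (m : nat) : {poly R} :=
  \prod_(0 <= i < m) linf a (b i).

Lemma coef_linfM (p : {poly R}) a b t :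
  (p * linf a b)`_t = (if t is t'.+1 then p`_t' * a else 0) + p`_t * b.
Proof. by rewrite /linf mulrDr coefD mulrA coefMX !coefMC; case: t. Qed.

Lemma linprodS a b m : linprod a b m.+1 = linprod a b m * linf a (b m).
Proof. by rewrite /linprod big_nat_recr. Qed.

Lemma linprod0 a b : linprod a b 0 = 1.
Proof. by rewrite /linprod big_geq. Qed.

Lemma linprod_gt a b m t : (m < t)%N -> (linprod a b m)`_t = 0.
Proof.
elim: m t => [|m IH] [|t] // ht; first by rewrite linprod0 coef1.
by rewrite linprodS coef_linfM !IH ?mul0r ?addr0 //; apply: ltnW.
Qed.

Lemma linprod_lead a b m : (linprod a b m)`_m = a ^+ m.
Proof.
elim: m => [|m IH]; first by rewrite linprod0 coef1.
by rewrite linprodS coef_linfM IH linprod_gt // mul0r addr0 exprSr.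
Qed.

Lemma linprod_coef0 a b m : (linprod a b m)`_0 = \prod_(0 <= i < m) b i.
Proof.
elim: m => [|m IH]; first by rewrite linprod0 coef1 big_geq.
by rewrite linprodS coef_linfM IH big_nat_recr //= add0r.
Qed.

Lemma coef_linprod_const a m k :
  (linprod 1 (fun _ => a) m)`_k = a ^+ (m - k) * ('C(m, k))%:R.
Proof.
elim: m k => [|m IH] k.
  by rewrite linprod0 coef1; case: k => [|k]; rewrite ?expr0 ?mul1r ?bin0 ?bin0n ?mulr0.
rewrite linprodS coef_linfM; case: k => [|k].
  by rewrite IH !subn0 !bin0 exprS; ring.
rewrite !IH binS natrD subSS.
case: (ltnP k m) => h; last by rewrite (@bin_small m k.+1) //; ring.
by rewrite (_ : (m - k)%N = (m - k.+1).+1) ?exprS; [ring | lia].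
Qed.

Lemma linprod_scale a b m t : (linprod a b m)`_t = a ^+ t * (linprod 1 b m)`_t.
Proof.
elim: m t => [|m IH] t.
  by rewrite !linprod0 coef1; case: t => [|t] /=; rewrite ?mulr0 ?mul1r ?expr0.
rewrite !linprodS !coef_linfM; case: t => [|t]; first by rewrite IH expr0 !mul1r add0r.
by rewrite !IH exprS; ring.
Qed.


(* The product with the [u]-th factor omitted; these are the summands of the
   derivative of [linprod 1 b m]. *)
Definition linprod_omit (b : nat -> R) m u : {poly R} :=
  \prod_(0 <= v < m) (if v != u then linf 1 (b v) else 1).

Lemma linprod_omitS b m u : (u < m)%N ->
  linprod_omit b m.+1 u = linprod_omit b m u * linf 1 (b m).
Proof. by move=> h; rewrite /linprod_omit big_nat_recr //= neq_ltn h orbT. Qed.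

Lemma linprod_omit_last b m : linprod_omit b m.+1 m = linprod 1 b m.
Proof.
rewrite /linprod_omit big_nat_recr //= eqxx mulr1.
by apply: eq_big_nat => v /andP[_ h]; rewrite neq_ltn h.
Qed.

Lemma linprod_split b m u : (u < m)%N -> linprod 1 b m = linf 1 (b u) * linprod_omit b m u.
Proof.
elim: m => [|m IH] // h; rewrite linprodS.
case: (ltngtP u m) => [lt_um|lt_mu|->]; [|lia|by rewrite linprod_omit_last mulrC].
by rewrite IH // linprod_omitS // mulrA.
Qed.

Lemma linprod_omit_gt b m u t : (u < m)%N -> (m <= t)%N -> (linprod_omit b m u)`_t = 0.
Proof.
elim: m t => [|m IH] t // h ht.
case: (ltngtP u m) => [lt_um|lt_mu|->]; [|lia|by rewrite linprod_omit_last linprod_gt].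
rewrite linprod_omitS // coef_linfM; case: t ht => // t ht.
by rewrite !IH ?mul0r ?addr0 //; apply: ltnW.
Qed.

Lemma deriv_linprod b m : (linprod 1 b m)^`() = \sum_(0 <= u < m) linprod_omit b m u.
Proof.
have deriv_linf x : (linf 1 x)^`() = 1.
  by rewrite /linf polyC1 mul1r derivD derivX derivC addr0.
elim: m => [|m IH]; first by rewrite linprod0 big_geq // -polyC1 derivC.
rewrite linprodS derivM IH deriv_linf mulr1 big_nat_recr //= linprod_omit_last.
congr (_ + _); rewrite mulr_suml; apply: eq_big_nat => u /andP[_ h].
by rewrite linprod_omitS.
Qed.

(* Synthetic division: the coefficients of [Q] are recovered from those of
   [Q * (X + b0)]. *)
Lemma synthetic_division (Q : {poly R}) (b0 : R) k j :
  \sum_(0 <= i < j) (Q * linf 1 b0)`_(k + i).+1 * (- b0) ^+ i =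
  Q`_k - (- b0) ^+ j * Q`_(k + j).
Proof.
elim: j => [|j IH]; first by rewrite big_geq // expr0 mul1r addn0 subrr.
by rewrite big_nat_recr //= IH coef_linfM addnS exprS; ring.
Qed.

Definition powsum (b : nat -> R) m i := \sum_(0 <= u < m) (- b u) ^+ i.

Lemma powsum0 b m : powsum b m 0 = m%:R.
Proof. by rewrite /powsum; under eq_bigr do rewrite expr0; rewrite sumr_const_nat subn0. Qed.

(* Differentiating the product, then dividing out each factor synthetically,
   gives [k e_k = \sum_i e_(k+i) p_i]. *)
Lemma deriv_coef_linprod b m k : (0 < k)%N -> (k <= m)%N ->
  (linprod 1 b m)`_k *+ k =
  \sum_(0 <= i < (m - k).+1) (linprod 1 b m)`_(k + i) * powsum b m i.
Proof.
case: k => // k _ hk.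
rewrite -coef_deriv deriv_linprod coef_sum.
have omit_coef u : (u < m)%N -> (linprod_omit b m u)`_k =
    \sum_(0 <= i < (m - k.+1).+1) (linprod 1 b m)`_(k.+1 + i) * (- b u) ^+ i.
  move=> hu; have := synthetic_division (linprod_omit b m u) (b u) k (m - k).
  have -> : (linprod_omit b m u)`_(k + (m - k)) = 0.
    by apply: linprod_omit_gt; rewrite // subnKC // ltnW.
  rewrite mulr0 subr0 => <-.
  rewrite subnSK //; apply: eq_bigr => i _.
  by rewrite (linprod_split b hu) addSn (mulrC (linf 1 (b u))).
rewrite (eq_big_nat _ _ (fun u hu => omit_coef u (andP hu).2)) exchange_big_nat.
by apply: eq_big_nat => i _; rewrite /powsum mulr_sumr.
Qed.

Lemma newton_identity b m k : (0 < k)%N -> (k <= m)%N ->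
  (linprod 1 b m)`_k * (k%:R - m%:R) =
  \sum_(0 <= i < m - k) (linprod 1 b m)`_(k + i.+1) * powsum b m i.+1.
Proof.
move=> k0 km; have := deriv_coef_linprod b k0 km.
rewrite big_nat_recl // addn0 powsum0 => e.
by rewrite mulrBr mulr_natr e; ring.
Qed.

End LinearProducts.

Section OddSquares.
Local Open Scope ring_scope.

Lemma sum_halves (F : nat -> int) n :
  \sum_(0 <= u < n + n) F u = \sum_(0 <= u < n) F u + \sum_(0 <= u < n) F (n + n - 1 - u)%N.
Proof.
rewrite (big_cat_nat _ (n := n)) ?leq_addr //=; congr (_ + _).
rewrite -{1}(add0n n) big_addn big_nat_rev /= addnK.
by apply: eq_big_nat => u /andP[_ h]; congr F; lia.
Qed.

Lemma dvdz_subXX (x y d : int) k : (d %| x - y)%Z -> (d %| x ^+ k - y ^+ k)%Z.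
Proof. by move=> h; rewrite subrXX; apply: dvdz_mulr. Qed.

Lemma dvdz_sq_reflect (x : int) c : (2 ^+ c.+3 %| (2 ^+ c.+2 - x) ^+ 2 - x ^+ 2)%Z.
Proof. by apply/dvdzP; exists (2 ^+ c.+1 - x); rewrite !exprS; ring. Qed.

(* The even power sums of the first [2^c] odd numbers are [2^c] modulo
   [2^(c+1)]; by induction on [c], pairing [2u+1] with [2^(c+2) - (2u+1)]. *)
Lemma odd_powsum_cong c i : (0 < i)%N ->
  (2 ^+ c.+1 %| \sum_(0 <= u < 2 ^ c) ((2 * u + 1)%N%:Z) ^+ (2 * i) - (2 ^ c)%N%:Z)%Z.
Proof.
move=> i0; elim: c => [|c IH]; first by rewrite expn0 big_nat1 /= expr1n subrr dvdz0.
rewrite expnS mul2n -addnn sum_halves.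
set n := (2 ^ c)%N; set F := fun u : nat => ((2 * u + 1)%N%:Z) ^+ (2 * i).
have F_refl u : (u < n)%N -> F (n + n - 1 - u)%N = (2 ^+ c.+2 - (2 * u + 1)%N%:Z) ^+ (2 * i).
  move=> hu; rewrite /F; congr (_ ^+ _).
  rewrite (_ : (2 * (n + n - 1 - u) + 1 = 4 * n - (2 * u + 1))%N) -?subzn; try lia.
  by rewrite PoszM /n natz_pow2 !exprS mulrA.
have -> : \sum_(0 <= u < n) F u + \sum_(0 <= u < n) F (n + n - 1 - u)%N - (n + n)%N%:Z
   = 2 * (\sum_(0 <= u < n) F u - n%:Z) + \sum_(0 <= u < n) (F (n + n - 1 - u)%N - F u).
  by rewrite sumrB PoszD; ring.
apply: rpredD; first by rewrite exprS; apply: dvdz_mul.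
rewrite big_nat_cond; apply: rpred_sum => u /andP[/andP[_ hu] _].
rewrite F_refl // /F !exprM.
by apply: dvdz_trans (dvdz_exp2l 2 (leqnSn c.+2)) _; apply/dvdz_subXX/dvdz_sq_reflect.
Qed.

(* The constant terms [2^(2c+2) - (2u+1)^2] of the factors of [K_c]. *)
Definition kconst c u : int := 2 ^+ (2 * c + 2) - ((2 * u + 1)%N%:Z) ^+ 2.

(* Hence the power sums of the roots [-(kconst c u)] are [2^c] modulo [2^(c+1)],
   exactly as for the [2^c]-fold root [1] of [(X - 1)^(2^c)]. *)
Lemma kconst_powsum_cong c i : (0 < i)%N ->
  (2 ^+ c.+1 %| powsum (kconst c) (2 ^ c) i - (2 ^ c)%N%:Z)%Z.
Proof.
move=> i0.
have -> : powsum (kconst c) (2 ^ c) i - (2 ^ c)%N%:Z =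
   \sum_(0 <= u < 2 ^ c) ((- kconst c u) ^+ i - (((2 * u + 1)%N%:Z) ^+ 2) ^+ i) +
   (\sum_(0 <= u < 2 ^ c) ((2 * u + 1)%N%:Z) ^+ (2 * i) - (2 ^ c)%N%:Z).
  by rewrite sumrB /powsum; under [X in _ = _ - X + _]eq_bigr do rewrite -exprM; ring.
apply: rpredD; last exact: odd_powsum_cong.
apply: rpred_sum => u _; apply: dvdz_subXX.
rewrite (_ : _ - _ = - 2 ^+ (2 * c + 2)); last by rewrite /kconst; ring.
by rewrite rpredN; apply: dvdz_exp2l; lia.
Qed.

Lemma kconst_odd c u : ~~ (2 %| kconst c u)%Z.
Proof.
have -> : kconst c u = 2 * (2 ^+ (2 * c + 1) - 2 * (u%:Z) ^+ 2 - 2 * u%:Z - 1) + 1.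
  by rewrite /kconst PoszD PoszM (_ : (2 * c + 2 = (2 * c + 1).+1)%N) ?exprS; [ring | lia].
by rewrite rpredDl ?dvdz1 // dvdz_mulr.
Qed.

End OddSquares.

Section KValuation.
Local Open Scope ring_scope.

Definition negpoly m : {poly int} := linprod 1 (fun _ => -1) m.

Lemma powsum_negpoly m i : powsum (fun _ => -1 : int) m i = m%:R.
Proof.
by rewrite /powsum; under eq_bigr do rewrite opprK expr1n; rewrite sumr_const_nat subn0.
Qed.

(* The unscaled polynomial [\prod_(u < 2^c) (X + kconst c u)]; its roots are
   all [1] modulo 8, so it is compared with [(X - 1)^(2^c)]. *)
Definition kpoly c := linprod 1 (kconst c) (2 ^ c).
Definition kdiff c k := (kpoly c)`_k - (negpoly (2 ^ c))`_k.

Lemma kdiff_newton c k : (0 < k)%N -> (k <= 2 ^ c)%N ->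
  kdiff c k * (k%:R - (2 ^ c)%:R) =
  \sum_(0 <= i < 2 ^ c - k) (kdiff c (k + i.+1)%N * powsum (kconst c) (2 ^ c) i.+1 +
     (negpoly (2 ^ c))`_(k + i.+1) * (powsum (kconst c) (2 ^ c) i.+1 - (2 ^ c)%:R)).
Proof.
move=> k0 km; rewrite /kdiff /kpoly /negpoly mulrBl.
rewrite newton_identity // [X in _ - X]newton_identity //.
by rewrite -sumrB; apply: eq_bigr => i _; rewrite powsum_negpoly; ring.
Qed.

Lemma dvdz_pow2_cancel (x : int) r e : (0 < r)%N ->
  (2 ^+ e %| x * r%:Z)%Z -> (2 ^+ (e - logn 2 r) %| x)%Z.
Proof.
move=> r0; have [->|nx] := eqVneq x 0; first by rewrite dvdz0.
have nr : r%:Z != 0 by rewrite -lt0n.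
by rewrite !dvdz_pow2E ?mulf_neq0 // val2M // val2_nat => h; lia.
Qed.

Lemma kdiff_step c k : (0 < k)%N -> (k <= 2 ^ c)%N ->
  (forall j, (k < j <= 2 ^ c)%N -> (2 %| kdiff c j)%Z) ->
  (2 ^+ c.+1 %| kdiff c k * (2 ^ c - k)%N%:Z)%Z.
Proof.
move=> k0 km hi; rewrite -subzn // (_ : _ * _ = - (kdiff c k * (k%:R - (2 ^ c)%:R))).
  2: by rewrite !natz; ring.
rewrite rpredN kdiff_newton // natz big_nat_cond.
apply: rpred_sum => i /andP[/andP[_ hik] _].
have hP := kconst_powsum_cong c (isT : (0 < i.+1)%N).
apply: rpredD; last by rewrite natz; apply: dvdz_mull.
rewrite exprS; apply: dvdz_mul; first by have := hi (k + i.+1)%N; apply; lia.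
rewrite natz_pow2 in hP; rewrite -(subrK (2 ^+ c) (powsum (kconst c) (2 ^ c) i.+1)).
by apply: rpredD => //; apply: dvdz_pow2_le hP.
Qed.

Lemma kdiff_top c : kdiff c (2 ^ c) = 0.
Proof. by rewrite /kdiff /kpoly /negpoly !linprod_lead expr1n subrr. Qed.

Lemma kdiff_cong c k : (0 < k)%N -> (k <= 2 ^ c)%N ->
  (2 %| kdiff c k)%Z /\ (2 ^+ c.+1 %| kdiff c k * (2 ^ c - k)%N%:Z)%Z.
Proof.
move: (leqnn (2 ^ c - k)%N); move: {2}(2 ^ c - k)%N => n.
elim: n k => [|n IH] k hn k0 km;
  have [->|ltk] := eqVneq k (2 ^ c)%N; rewrite ?kdiff_top ?dvdz0 ?mul0r ?dvdz0 //; first lia.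
have hdiv : (2 ^+ c.+1 %| kdiff c k * (2 ^ c - k)%N%:Z)%Z.
  apply: kdiff_step => // j /andP[hkj hj].
  by have [] := IH j ltac:(lia) (ltn_trans k0 hkj) hj.
have r0 : (0 < 2 ^ c - k)%N by lia.
have hlog := @logn2_lt (2 ^ c - k)%N c r0 ltac:(lia).
split => //; rewrite -[2]expr1; apply: dvdz_pow2_le (dvdz_pow2_cancel r0 hdiv); lia.
Qed.

Lemma kpoly_coef0_odd c : ~~ (2 %| (kpoly c)`_0)%Z.
Proof.
rewrite /kpoly linprod_coef0; apply: (big_ind (fun x => ~~ (2 %| x)%Z)) => //.
- by move=> x y; rewrite !dvdzE abszM Euclid_dvdM // => /negbTE -> /negbTE ->.
- by move=> i _; apply: kconst_odd.
Qed.

Lemma val2_kpoly c j : (j <= 2 ^ c)%N ->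
  (kpoly c)`_j != 0 /\ val2 ((kpoly c)`_j) = binval c j.
Proof.
move=> hj; have [->|j0] := posnP j.
  have odd0 := kpoly_coef0_odd c.
  have nz : (kpoly c)`_0 != 0 by apply: contraNneq odd0 => ->; rewrite dvdz0.
  split => //; rewrite binval0; apply/eqP; rewrite -leqn0 leqNgt -dvdz_pow2E //.
have [->|ltj] := eqVneq j (2 ^ c)%N.
  by rewrite /kpoly linprod_lead expr1n binval_top.
set B := (negpoly (2 ^ c))`_j.
have nB : B != 0.
  by rewrite /B coef_linprod_const mulf_neq0 ?signr_eq0 // natz -lt0n bin_gt0.
have vB : val2 B = binval c j.
  by rewrite /B coef_linprod_const natz /val2 abszMsign absz_nat.
have r0 : (0 < 2 ^ c - j)%N by lia.
have hsum : (binval c j + logn 2 (2 ^ c - j) = c)%N.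
  by rewrite -(binval_sym hj); apply: logn_bin_pow2 => //; lia.
have hdiv : (2 ^+ (val2 B).+1 %| kdiff c j)%Z.
  have [_ h] := kdiff_cong j0 hj.
  by apply: dvdz_pow2_le (dvdz_pow2_cancel r0 h); lia.
have [nz vz] := val2_dominant nB hdiv.
have <- : B + kdiff c j = (kpoly c)`_j by rewrite /kdiff addrC subrK.
by rewrite vz vB.
Qed.

End KValuation.

Section GPolynomials.
Local Open Scope ring_scope.

Lemma prod_parity_split (R : comRingType) (F : nat -> R) k :
  \prod_(0 <= i < (2 * k).-1) F i =
  (\prod_(0 <= j < k) F (2 * j)%N) * \prod_(0 <= j < k.-1) F (2 * j + 1)%N.
Proof.
elim: k => [|[|k] IH]; first by rewrite !big_geq // mulr1.
  by rewrite big_nat1 big_nat1 big_geq // mulr1.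
rewrite (_ : (2 * k.+2).-1 = ((2 * k.+1).-1).+2)%N; last by lia.
rewrite big_nat_recr // big_nat_recr // IH (big_nat_recr k.+1) //.
rewrite [in X in _ = _ * X]big_nat_recr //.
rewrite (_ : ((2 * k.+1).-1 = 2 * k + 1)%N); last by lia.
rewrite (_ : ((2 * k + 1).+1 = 2 * k.+1)%N); last by lia.
by rewrite /= -!/(_ * _)%R; ring.
Qed.

(* [W_c = \prod_(i < 2^c - 1) (X + 2^(2c) - (i+1)^2)] drives the rising
   factorial of [2^(c+1)]; [G_c] is [W_c] with variable scaled by [2^(2c)],
   and [K_c] is [kpoly c] with variable scaled by [2^(2c+2)]. *)
Definition gconst c i : int := 2 ^+ (2 * c) - ((i + 1)%N%:Z) ^+ 2.
Definition Wpoly c := linprod 1 (gconst c) (wdeg c).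
Definition Gpoly c := linprod (2 ^+ (2 * c)) (gconst c) (wdeg c).
Definition Kpoly c := linprod (2 ^+ (2 * c + 2)) (kconst c) (2 ^ c).

(* Splitting the factors of [G_(c+1)] by the parity of [i + 1]: odd ones give
   [K_c], even ones give [4 G_c]. *)
Lemma Gpoly_rec c : Gpoly c.+1 = ((2 ^+ 2) ^+ wdeg c)%:P * (Kpoly c * Gpoly c).
Proof.
rewrite /Gpoly /linprod (_ : wdeg c.+1 = (2 * 2 ^ c).-1) ?prod_parity_split; last first.
  by rewrite /wdeg expnS.
have -> : \prod_(0 <= j < 2 ^ c) linf (2 ^+ (2 * c.+1)) (gconst c.+1 (2 * j)) = Kpoly c.
  rewrite /Kpoly /linprod; apply: eq_big_nat => j _.
  by rewrite /gconst /kconst (_ : (2 * c.+1 = 2 * c + 2)%N) ?addn1 //; lia.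
have -> : \prod_(0 <= j < (2 ^ c).-1) linf (2 ^+ (2 * c.+1)) (gconst c.+1 (2 * j + 1))
    = \prod_(0 <= j < wdeg c) ((2 ^+ 2)%:P * linf (2 ^+ (2 * c)) (gconst c j)).
  apply: eq_big_nat => j _.
  rewrite /linf /gconst mulrDr mulrA -!polyCM (_ : (2 * c.+1 = 2 + 2 * c)%N); last by lia.
  rewrite exprD (_ : (2 * j + 1 + 1 = 2 * (j + 1))%N) ?PoszM; last by lia.
  by congr (_%:P * 'X + _%:P); ring.
by rewrite big_split /= prodr_const_nat subn0 -rmorphXn /=; ring.
Qed.

Lemma coef_GpolyS c t : (Gpoly c.+1)`_t =
  (2 ^+ 2) ^+ wdeg c * \sum_(j < t.+1) (Kpoly c)`_j * (Gpoly c)`_(t - j).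
Proof. by rewrite Gpoly_rec coefCM coefM. Qed.

Lemma val2_Kpoly c j : (j <= 2 ^ c)%N ->
  (Kpoly c)`_j != 0 /\ val2 ((Kpoly c)`_j) = ((2 * c + 2) * j + binval c j)%N.
Proof.
move=> hj; have [nz v] := val2_kpoly hj.
rewrite /Kpoly linprod_scale -exprM; split; first by rewrite mulf_neq0 ?pow2_neq0.
by rewrite val2M ?pow2_neq0 // val2_pow2 v.
Qed.

Lemma Kpoly_gt c j : (2 ^ c < j)%N -> (Kpoly c)`_j = 0.
Proof. exact: linprod_gt. Qed.

Lemma Gpoly_gt c t : (wdeg c < t)%N -> (Gpoly c)`_t = 0.
Proof. exact: linprod_gt. Qed.

(* One step of the valuation recursion: in [(G_(c+1))_t], the summand
   [(K_c)_(t - wdeg c) (G_c)_(wdeg c)] strictly dominates, by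
   [phi_strict_min]. *)
Lemma val2_GpolyS c t :
  (forall s, (s <= wdeg c)%N ->
     (Gpoly c)`_s != 0 /\ val2 ((Gpoly c)`_s) = (val2 ((Gpoly c)`_0) + phi c s)%N) ->
  (t <= wdeg c.+1)%N -> (Gpoly c.+1)`_t != 0 /\
  val2 ((Gpoly c.+1)`_t) = (2 * wdeg c + (val2 ((Gpoly c)`_0) + phi c.+1 t))%N.
Proof.
move=> IH ht; have hS := wdegS c; set j0 := (t - wdeg c)%N.
have ej0 : j0 = (t - wdeg c)%N by [].
have hj0 : (j0 < t.+1)%N by lia.
have [nk vk] := @val2_Kpoly c j0 ltac:(lia).
have [ng vg] := IH (t - j0)%N ltac:(lia).
set F := fun j : 'I_t.+1 => (Kpoly c)`_j * (Gpoly c)`_(t - j).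
have hdom j : j != Ordinal hj0 -> (2 ^+ (val2 (F (Ordinal hj0))).+1 %| F j)%Z.
  case: j => j hj hne; have {}hne : j != j0 by apply: contraNneq hne => ej; apply/eqP/val_inj.
  have [hjK|hjK] := leqP j (2 ^ c); last by rewrite /F Kpoly_gt ?mul0r ?dvdz0.
  have [hjG|hjG] := leqP (t - j) (wdeg c); last by rewrite /F Gpoly_gt ?mulr0 ?dvdz0.
  have [nk' vk'] := val2_Kpoly hjK; have [ng' vg'] := IH _ hjG.
  rewrite /= dvdz_pow2E ?mulf_neq0 // !val2M // vk vg vk' vg'.
  by have := phi_strict_min ht (ltnSE hj) hjK hjG hne; rewrite phi_rec -/j0; lia.
have [nz vsum] := val2_sum_dominant (mulf_neq0 nk ng : F (Ordinal hj0) != 0) hdom.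
rewrite coef_GpolyS -exprM; split; first by rewrite mulf_neq0 ?pow2_neq0.
by rewrite phi_rec -/j0 val2M ?pow2_neq0 // val2_pow2 vsum [F _]/= val2M // vk vg; lia.
Qed.

Lemma val2_Gpoly c t : (t <= wdeg c)%N ->
  (Gpoly c)`_t != 0 /\ val2 ((Gpoly c)`_t) = (val2 ((Gpoly c)`_0) + phi c t)%N.
Proof.
elim: c t => [|c IH] t ht.
  by move: ht; rewrite /wdeg expn0 leqn0 => /eqP ->; rewrite /Gpoly linprod0 coef1.
have [_ v0] := val2_GpolyS IH (leq0n _); have [nt vt] := val2_GpolyS IH ht.
by split => //; rewrite vt v0 phi0; lia.
Qed.

End GPolynomials.

Section RisingFactorial.
Local Open Scope ring_scope.

Lemma stirling1_gt n k : (n < k)%N -> stirling1 n k = 0.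
Proof.
move=> h; rewrite /stirling1 /rising_poly -(big_mkord xpredT (fun i => 'X + (i%:R)%:P)).
rewrite (eq_bigr (fun i => linf 1 (i%:R : int))) ?linprod_gt //.
by move=> i _; rewrite /linf polyC1 mul1r.
Qed.

Lemma linf_comp (b : int) q : linf 1 b \Po q = q + b%:P.
Proof.
by rewrite /linf comp_polyD comp_polyC comp_polyM comp_polyC comp_polyX polyC1 mul1r.
Qed.

(* [q_c = X (X + 2^(c+1)) = (X + 2^c)^2 - 2^(2c)]. *)
Definition qpoly c : {poly int} := 'X * ('X + (2 ^+ c.+1)%:P).

Lemma rising_pair c d : (d.+1 < 2 ^ c)%N ->
  ('X + (((2 ^ c - d.+1)%N)%:R)%:P) * ('X + (((d + (2 ^ c).+1)%N)%:R)%:P)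
  = qpoly c + (gconst c d)%:P :> {poly int}.
Proof.
move=> h; rewrite !natz -subzn 1?ltnW //.
rewrite (_ : (d + (2 ^ c).+1)%N = (2 ^ c + d.+1)%N) ?PoszD ?natz_pow2; last by lia.
rewrite /qpoly /gconst addn1 !(polyCD, polyCN, polyCB, polyCM, rmorphXn) /=.
by rewrite (_ : (2 * c = c + c)%N) ?exprD ?exprS; [ring | lia].
Qed.

Lemma rising_poly_pow2 c :
  rising_poly (2 ^ c.+1) = 'X * (('X + (2 ^+ c)%:P) * (Wpoly c \Po qpoly c)).
Proof.
rewrite /rising_poly -(big_mkord xpredT (fun i => 'X + (i%:R)%:P)).
set F := fun i : nat => 'X + ((i%:R : int))%:P; set M := (2 ^ c)%N.
have hM : (0 < M)%N by rewrite expn_gt0.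
rewrite expnS mul2n -addnn big_ltn ?addn_gt0 ?hM //.
rewrite (big_cat_nat _ (n := M)) ?leq_addr //= (big_ltn (m := M)); last by lia.
have lower : \prod_(1 <= i < M) F i = \prod_(0 <= d < wdeg c) F (M - d.+1)%N.
  rewrite big_nat_rev /= big_add1 /wdeg -/M.
  by apply: eq_big_nat => d hd; congr F; lia.
have upper : \prod_(M.+1 <= i < M + M) F i = \prod_(0 <= d < wdeg c) F (d + M.+1)%N.
  by rewrite -{1}(add0n M.+1) big_addn (_ : (M + M - M.+1 = wdeg c)%N) // /wdeg; lia.
have paired : Wpoly c \Po qpoly c = \prod_(0 <= d < wdeg c) (F (M - d.+1)%N * F (d + M.+1)%N).
  rewrite /Wpoly /linprod rmorph_prod /=; apply: eq_big_nat => d hd.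
  by rewrite linf_comp /F rising_pair //; move: hd; rewrite /wdeg; lia.
by rewrite lower upper paired big_split /= polyC0 addr0 natz /M natz_pow2; ring.
Qed.

(* Coefficients of [(x + 2^c) (x + 2^(c+1))^t], the factor multiplying the
   [t]-th coefficient of [W_c] in the expansion of the rising factorial. *)
Definition Ecoef c t j : int := (('X + (2 ^+ c)%:P) * ('X + (2 ^+ c.+1)%:P) ^+ t)`_j.

Lemma coef_XaddC_exp (a : int) t j : (('X + a%:P) ^+ t)`_j = a ^+ (t - j) * ('C(t, j))%:R.
Proof.
by rewrite -coef_linprod_const /linprod prodr_const_nat subn0 /linf polyC1 mul1r.
Qed.

Lemma EcoefE c t j : Ecoef c t j =
  (if j is j'.+1 then (2 ^+ c.+1) ^+ (t - j') * ('C(t, j'))%:R else 0)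
  + 2 ^+ c * ((2 ^+ c.+1) ^+ (t - j) * ('C(t, j))%:R).
Proof.
rewrite /Ecoef mulrDl coefD coefXM coefCM coef_XaddC_exp.
by case: j => [|j] //=; rewrite coef_XaddC_exp.
Qed.

Lemma Ecoef_top c t : Ecoef c t t.+1 = 1.
Proof. by rewrite EcoefE subnn binn bin_small // expr0 mulr0 mulr0 addr0 mulr1. Qed.

Lemma Ecoef_gt c t j : (t.+1 < j)%N -> Ecoef c t j = 0.
Proof.
move=> h; rewrite EcoefE; case: j h => // j h.
by rewrite !bin_small ?mulr0 ?addr0 //; lia.
Qed.

Lemma Ecoef_diag c t : Ecoef c t t = 2 ^+ c * (2 * t%:Z + 1).
Proof.
rewrite EcoefE subnn binn expr0; case: t => [|t]; first by rewrite mulr0 add0r; ring.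
by rewrite (_ : (t.+1 - t = 1)%N) ?binSn ?expr1 ?exprS -?natz; [ring | lia].
Qed.

Lemma Ecoef_dvd c t j : (j < t)%N -> (2 ^+ (c + c.+1 * (t - j)) %| Ecoef c t j)%Z.
Proof.
move=> h; rewrite EcoefE; apply: rpredD.
  case: j h => [|j] h; first exact: dvdz0.
  by apply: dvdz_mulr; rewrite -exprM; apply: dvdz_exp2l; nia.
by rewrite mulrA; apply: dvdz_mulr; rewrite -exprM -exprD.
Qed.

Lemma sum_ord_ext (F : nat -> int) n1 n2 :
  (forall i, (n1 <= i)%N -> F i = 0) -> (forall i, (n2 <= i)%N -> F i = 0) ->
  \sum_(i < n1) F i = \sum_(i < n2) F i.
Proof.
wlog le : n1 n2 / (n1 <= n2)%N.
  move=> W h1 h2; case: (leqP n1 n2) => h; first exact: W.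
  by symmetry; apply: W => //; exact: ltnW.
move=> h1 _; rewrite -!(big_mkord xpredT F) [in RHS](big_cat_nat _ (n := n1)) //=.
rewrite [X in _ = _ + X]big_nat_cond [X in _ = _ + X]big1 ?addr0 // => i /andP[/andP[hi _] _].
exact: h1.
Qed.

Lemma stirling1_pow2 c K :
  stirling1 (2 ^ c.+1) K.+1 = \sum_(i < K.+1) (Wpoly c)`_i * Ecoef c i (K - i).
Proof.
rewrite /stirling1 rising_poly_pow2 coefXM /= comp_polyE mulr_sumr coef_sum.
set G := fun i => (Wpoly c)`_i * (if (K < i)%N then 0 else Ecoef c i (K - i)).
have e i : (('X + (2 ^+ c)%:P) * ((Wpoly c)`_i *: qpoly c ^+ i))`_K = G i.
  by rewrite -scalerAr coefZ /qpoly exprMn mulrCA coefXnM /G; case: ifP.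
rewrite (eq_bigr (fun i : 'I_(size (Wpoly c)) => G i)) => [|i _]; last exact: e.
rewrite (@sum_ord_ext G _ K.+1) => [|i hi|i hi].
- by apply: eq_bigr => i _; rewrite /G ltnNge -ltnS ltn_ord.
- by rewrite /G nth_default // mul0r.
- by rewrite /G hi mulr0.
Qed.

End RisingFactorial.

Section StirlingValuation.
Local Open Scope ring_scope.

Lemma Wpoly_gt c t : (wdeg c < t)%N -> (Wpoly c)`_t = 0.
Proof. exact: linprod_gt. Qed.

Lemma val2_Wpoly c t : (t <= wdeg c)%N -> (Wpoly c)`_t != 0 /\
  val2 ((Gpoly c)`_t) = (2 * c * t + val2 ((Wpoly c)`_t))%N.
Proof.
move=> h; have [nz _] := val2_Gpoly h.
move: nz; rewrite /Gpoly linprod_scale -/(Wpoly c) -exprM => nz.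
have nW : (Wpoly c)`_t != 0 by apply: contraNneq nz => ->; rewrite mulr0.
by split => //; rewrite val2M ?pow2_neq0 // val2_pow2.
Qed.

Definition wval c s := val2 ((Wpoly c)`_s).

(* Along the coefficients of [W_c] the valuation drops by at most [2c] per
   step, since [phi c] is nondecreasing. *)
Lemma val2_Wpoly_slope c s t : (s <= t)%N -> (t <= wdeg c)%N ->
  (wval c s <= wval c t + 2 * c * (t - s))%N.
Proof.
rewrite /wval => hst ht; have hs := leq_trans hst ht.
have [_ vs] := val2_Wpoly hs; have [_ vt] := val2_Wpoly ht.
have [_ gs] := val2_Gpoly hs; have [_ gt] := val2_Gpoly ht.
by have := phi_mono hst ht; nia.
Qed.

Lemma stirling1_pow2_other c s (b : bool) (i : 'I_(2 * s + b).+1) :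
  (s <= wdeg c)%N -> val i != s ->
  (2 ^+ (wval c s + (if b then 0 else c)%N).+1 %|
     (Wpoly c)`_i * Ecoef c i (2 * s + b - i))%Z.
Proof.
case: i => i /= hi hs; case: (ltngtP i s) => // [lt_is|lt_si] _.
  by rewrite Ecoef_gt ?mulr0 ?dvdz0 //; case: b hi; lia.
have [hiW|hiW] := leqP i (wdeg c); last by rewrite Wpoly_gt // mul0r dvdz0.
have hslope := val2_Wpoly_slope (ltnW lt_si) hiW.
apply: (@dvdz_pow2_le _ (wval c i + (c + c.+1 * (i - (2 * s + b - i))))).
  have hx : (i - (2 * s + b - i) + b = 2 * (i - s))%N by case: b hi; lia.
  have e0 : (0 < i - s)%N by rewrite subn_gt0.
  move: (i - s)%N (i - (2 * s + b - i))%N hslope hx e0 => e x hslope hx e0.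
  have hcx : (c * x + c * b = 2 * (c * e))%N by rewrite -mulnDr hx mulnCA.
  by rewrite mulSn; move: hx hcx hslope e0; clear; case: b => /=; lia.
by rewrite exprD /wval; apply: dvdz_mul (dvdz_pow2_val _) (Ecoef_dvd _ _); case: b hi; lia.
Qed.

Lemma val2_stirling1_pow2 c s (b : bool) : (s <= wdeg c)%N ->
  stirling1 (2 ^ c.+1) (2 * s + b).+1 != 0 /\
  val2 (stirling1 (2 ^ c.+1) (2 * s + b).+1) = (wval c s + (if b then 0 else c))%N.
Proof.
rewrite /wval => hs; have [nW _] := val2_Wpoly hs.
have hmain : Ecoef c s (2 * s + b - s) = if b then 1 else 2 ^+ c * (2 * s%:Z + 1).
  case: b => /=; last by rewrite (_ : (2 * s + 0 - s = s)%N) ?Ecoef_diag //; lia.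
  by rewrite (_ : (2 * s + 1 - s = s.+1)%N) ?Ecoef_top //; lia.
have [nz v] : (Wpoly c)`_s * Ecoef c s (2 * s + b - s) != 0 /\
    val2 ((Wpoly c)`_s * Ecoef c s (2 * s + b - s)) =
    (val2 ((Wpoly c)`_s) + (if b then 0 else c))%N.
  rewrite hmain; case: b {hmain} => /=; first by rewrite mulr1 addn0.
  have nE : 2 ^+ c * (2 * s%:Z + 1) != 0 by rewrite mulf_neq0 ?pow2_neq0 ?odd_int_neq0.
  by rewrite mulf_neq0 // !val2M ?pow2_neq0 ?odd_int_neq0 // val2_pow2 val2_odd addn0.
have hi : (s < (2 * s + b).+1)%N by lia.
rewrite stirling1_pow2 -v.
apply: (@val2_sum_dominant _ (fun i : 'I_(2 * s + b).+1 => _) (Ordinal hi)) => //= i hne.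
by rewrite v; apply: stirling1_pow2_other.
Qed.

Lemma v2_stirling1_pow2 c m : (m < 2 ^ c.+1)%N ->
  v2 (stirling1 (2 ^ c.+1) m.+1) = Some (wval c m./2 + (if odd m then 0 else c))%N.
Proof.
move=> hm; have hs : (m./2 <= wdeg c)%N.
  have : (m./2 < 2 ^ c)%N by rewrite ltn_half_double -mul2n -expnS.
  by rewrite /wdeg; lia.
have em : (2 * m./2 + odd m = m)%N by rewrite addnC mul2n odd_double_half.
have [nz v] := val2_stirling1_pow2 (odd m) hs; rewrite em in nz v.
by rewrite v2E // v.
Qed.

End StirlingValuation.

Unset Implicit Arguments.

Theorem mainTheorem11 (n k : nat) :
  (2 <= n)%N -> (1 <= k)%N -> (k <= 2 ^ n)%N ->
  v_gt_minus (v2 (stirling1 (2 ^ n) k.+1)) (v2 (stirling1 (2 ^ n) k)) n.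
Proof.
move=> hn hk1 hk2; have [c ec] : exists c, n = c.+1 by exists n.-1; lia.
subst n; have [->|hk] := eqVneq k (2 ^ c.+1).
  by rewrite stirling1_gt ?ltnSn // /v2 eqxx.
have [m em] : exists m, k = m.+1 by exists k.-1; lia.
have hm : (m.+1 < 2 ^ c.+1)%N by lia.
subst k; rewrite (v2_stirling1_pow2 (ltnW hm)) (v2_stirling1_pow2 hm) /= uphalf_half.
have : (odd m + m./2 < 2 ^ c)%N by rewrite -uphalf_half uphalfE ltn_half_double -mul2n -expnS.
(* For even [m] the two valuations differ by [c]; for odd [m] use the slope bound. *)
case: (odd m) => /= hlt; last by rewrite add0n; lia.
have := @val2_Wpoly_slope c m./2 (1 + m./2) (leq_addl _ _).
by rewrite /wdeg addnK muln1 => slope; have := slope ltac:(lia); lia.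
Qed.
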